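(* For every $n$, the parking order $\le_P$ on parking functions of degree $n$ admits least upper bounds: for parking functions $f=(\sigma,s)$ and $g=(\tau,t)$ of degree $n$, the pair $(\sigma\vee\tau,\ s\vee t)$ is a parking function and it is the least upper bound $f\vee g$ in $\le_P$ (joins taken in the weak order and in the Tamari order respectively).
   Context: $\mathrm{PBT}_n$ is the set of planar binary trees (each internal node has exactly two children, left and right) with $n+1$ leaves, leaves numbered left to right; $\mathrm{Des}(t)=\{1\le i\le n-1:\text{the }(i+1)\text{-st leaf of }t\text{ is a right child}\}$. For $\sigma\in S_n$ (one-line notation), $\mathrm{Des}(\sigma)=\{i:\sigma(i)>\sigma(i+1)\}$ and $\mathrm{Inv}(\sigma)=\{(i,j):i<j,\sigma(i)>\sigma(j)\}$. A parking function of degree $n$ is a pair $(\sigma,t)\in S_n\times\mathrm{PBT}_n$ with $\mathrm{Des}(t)\subseteq\mathrm{Des}(\sigma)$. The (left) weak order: $\sigma\le_w\tau$ iff $\mathrm{Inv}(\sigma)\subseteq\mathrm{Inv}(\tau)$. The Tamari order $\le_T$ on $\mathrm{PBT}_n$ is the reflexive–transitive closure of $s\le t$ whenever $t$ is obtained from $s$ by replacing a subtree of the form $x(A,y(B,C))$ by $x(y(A,B),C)$ (left rotation). Both are lattices. The parking order: $(\sigma,s)\le_P(\tau,t)$ iff $\sigma\le_w\tau$ and $s\le_T t$. *)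

From Stdlib Require Import Relation_Operators.
From mathcomp Require Import all_boot all_order all_fingroup.
Set Implicit Arguments. Unset Strict Implicit. Unset Printing Implicit Defensive.

(* Permutations of {1..n} are 'S_n (positions and values 0-indexed). *)

(* Des(sigma) as a set of 1-indexed positions i in 1..n-1 with sigma(i) > sigma(i+1). *)
Definition des_perm (n : nat) (s : 'S_n) : pred nat :=
  fun i => [&& 0 < i, i < n &
     (nth 0 [seq val (s k) | k <- enum 'I_n] i.-1 >
      nth 0 [seq val (s k) | k <- enum 'I_n] i)].

Definition inv_perm (n : nat) (s : 'S_n) (i j : 'I_n) : bool :=
  (i < j) && (s j < s i).

Definition weak_le (n : nat) (s t : 'S_n) : Prop :=
  forall i j : 'I_n, inv_perm s i j -> inv_perm t i j.

Inductive tree : Type := Leaf | Node of tree & tree.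

Fixpoint leaves (t : tree) : nat :=
  match t with Leaf => 1 | Node l r => leaves l + leaves r end.

Definition pbt (n : nat) (t : tree) : Prop := leaves t = n.+1.

(* For each leaf, left to right: is it a right child? (root leaf: false) *)
Fixpoint leaf_dirs_aux (b : bool) (t : tree) : seq bool :=
  match t with
  | Leaf => [:: b]
  | Node l r => leaf_dirs_aux false l ++ leaf_dirs_aux true r
  end.
Definition leaf_dirs (t : tree) : seq bool := leaf_dirs_aux false t.

(* Des(t) = { 1 <= i <= n-1 : the (i+1)-st leaf is a right child } *)
Definition des_tree (n : nat) (t : tree) : pred nat :=
  fun i => [&& 0 < i, i < n & nth false (leaf_dirs t) i].

Inductive rot_step : tree -> tree -> Prop :=
  | rot_root A B C : rot_step (Node A (Node B C)) (Node (Node A B) C)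
  | rot_left l l' r : rot_step l l' -> rot_step (Node l r) (Node l' r)
  | rot_right l r r' : rot_step r r' -> rot_step (Node l r) (Node l r').

Definition tamari_le : tree -> tree -> Prop := clos_refl_trans tree rot_step.

Definition parking (n : nat) (s : 'S_n) (t : tree) : Prop :=
  pbt n t /\ (forall i, des_tree n t i -> des_perm s i).

Definition parking_le (n : nat) (f g : 'S_n * tree) : Prop :=
  weak_le f.1 g.1 /\ tamari_le f.2 g.2.

Definition is_weak_join (n : nat) (s t j : 'S_n) : Prop :=
  [/\ weak_le s j, weak_le t j & forall u : 'S_n, weak_le s u -> weak_le t u -> weak_le j u].

Definition is_tamari_join (n : nat) (s t j : tree) : Prop :=
  [/\ pbt n j, tamari_le s j, tamari_le t j &
      forall u, pbt n u -> tamari_le s u -> tamari_le t u -> tamari_le j u].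

(* Descents grow along both orders: an inversion of adjacent positions survives
   in every larger permutation, and a left rotation only turns a left-child leaf
   into a right child.  Hence Des(sigma) and Des(tau) lie in Des(sigma \/ tau),
   and it remains to see that Des(s \/ t) lies in P := Des(s) u Des(t).  The
   trees with descents in P have a Tamari maximum: rotating while the descents
   stay in P terminates (the sum over the nodes of the number of leaves of the
   left subtree increases) in a saturated tree, a left spine of right combs
   whose inner left leaves lie outside P, and there is only one saturated tree
   of each size.  This common upper bound of s and t lies above s \/ t. *)

From mathcomp Require Import all_boot all_order all_fingroup.
From mathcomp Require Import zify.
From Stdlib Require Import Relation_Operators.

Set Implicit Arguments. Unset Strict Implicit. Unset Printing Implicit Defensive.

Lemma leaves_gt0 t : 0 < leaves t.
Proof. by elim: t => //= l IHl r IHr; rewrite addn_gt0 IHl. Qed.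

Lemma size_leaf_dirs_aux b t : size (leaf_dirs_aux b t) = leaves t.
Proof. by elim: t b => //= l IHl r IHr b; rewrite size_cat IHl IHr. Qed.

Lemma last_leaf_dirs_aux_true x t : last x (leaf_dirs_aux true t) = true.
Proof. by elim: t x => //= l _ r IHr x; rewrite last_cat IHr. Qed.

Lemma rot_step_leaves t t' : rot_step t t' -> leaves t = leaves t'.
Proof. by elim=> //= *; lia. Qed.

Lemma tamari_le_leaves t t' : tamari_le t t' -> leaves t = leaves t'.
Proof. by elim=> [? ? /rot_step_leaves | | ? ? ? _ -> _ ->]. Qed.

Definition dirs_le (x y : seq bool) : Prop :=
  forall i, nth false x i -> nth false y i.

(* [o] is the position, in the whole tree, of the first leaf described by [ds]. *)
Definition dirs_within (P : pred nat) (o : nat) (ds : seq bool) : Prop :=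
  forall i, nth false ds i -> P (o + i).

Lemma dirs_le_cat a a' b b' : size a = size a' ->
  dirs_le a a' -> dirs_le b b' -> dirs_le (a ++ b) (a' ++ b').
Proof.
by move=> e ha hb i; rewrite !nth_cat -e; case: ltnP => _; [exact: ha | exact: hb].
Qed.

Lemma dirs_le_within P o x y : dirs_le x y -> dirs_within P o y -> dirs_within P o x.
Proof. by move=> le_xy wy i /le_xy /wy. Qed.

Lemma dirs_within_cat P o a b :
  dirs_within P o (a ++ b) <-> dirs_within P o a /\ dirs_within P (o + size a) b.
Proof.
split=> [w | [wa wb] i].
- split=> i hi.
  + apply: w; rewrite nth_cat; case: ltnP hi => // le_a.
    by rewrite nth_default.
  + by rewrite -addnA; apply: w; rewrite nth_cat ltnNge leq_addr addKn.
- rewrite nth_cat; case: ltnP => [_ /wa // | le_a /wb].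
  by rewrite -addnA subnKC.
Qed.

Lemma leaf_dirs_aux_false_true t :
  dirs_le (leaf_dirs_aux false t) (leaf_dirs_aux true t).
Proof. by case: t => [|l r] // [|i]. Qed.

Lemma rot_step_dirs_le b t t' : rot_step t t' ->
  dirs_le (leaf_dirs_aux b t) (leaf_dirs_aux b t').
Proof.
move=> r; elim: r b => [A B C | l l' r rl IH | l r r' rr IH] b /=.
- rewrite -catA; apply: dirs_le_cat => //.
  by apply: dirs_le_cat; rewrite ?size_leaf_dirs_aux //; exact: leaf_dirs_aux_false_true.
- by apply: dirs_le_cat; rewrite ?size_leaf_dirs_aux ?(rot_step_leaves rl).
- exact: dirs_le_cat.
Qed.

Lemma tamari_le_dirs_le t t' : tamari_le t t' -> dirs_le (leaf_dirs t) (leaf_dirs t').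
Proof.
elim=> [x y /(@rot_step_dirs_le false) // | x i // | x y z _ le1 _ le2 i].
by move=> /le1 /le2.
Qed.

Fixpoint left_weight t :=
  if t is Node l r then left_weight l + left_weight r + leaves l else 0.

Lemma rot_step_left_weight t t' : rot_step t t' -> left_weight t < left_weight t'.
Proof.
elim=> [A B C | l l' r rl IH | l r r' rr IH] /=.
- by have := leaves_gt0 A; lia.
- by rewrite (rot_step_leaves rl); lia.
- by lia.
Qed.

Lemma left_weight_le t : left_weight t <= leaves t * leaves t.
Proof. by elim: t => //= l IHl r IHr; have := leaves_gt0 r; nia. Qed.

Section Saturation.
Variable P : pred nat.

Fixpoint comb_outside o R : bool :=
  match R with
  | Leaf => true
  | Node Leaf C => ~~ P o && comb_outside o.+1 C
  | Node _ _ => false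
  end.

(* The Tamari-maximal trees with descents in [P]: a left spine of right combs
   none of whose left leaves may become a right child. *)
Fixpoint saturated o t : bool :=
  if t is Node A R then saturated o A && comb_outside (o + leaves A) R else true.

Lemma rotate_into_comb b o A R :
  dirs_within P o (leaf_dirs_aux b (Node A R)) ->
  ~~ comb_outside (o + leaves A) R ->
  exists2 t', rot_step (Node A R) t' & dirs_within P o (leaf_dirs_aux b t').
Proof.
elim: R b o A => [//|B _ C IHC] b o A /= /dirs_within_cat[wA].
rewrite size_leaf_dirs_aux => /dirs_within_cat[wB wC].
have rotate_root : dirs_within P (o + leaves A) (leaf_dirs_aux true B) ->
    exists2 t', rot_step (Node A (Node B C)) t' & dirs_within P o (leaf_dirs_aux b t').
  move=> wB'; exists (Node (Node A B) C); first exact: rot_root.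
  rewrite /= -catA; apply/dirs_within_cat; split=> //.
  by apply/dirs_within_cat; rewrite !size_leaf_dirs_aux in wC *.
(* The rotation moves [B] to a right child, which changes the direction of its
   first leaf only if [B] is a leaf. *)
case: B wB wC rotate_root => [|B1 B2] wB wC rotate_root; last by move=> _; exact: rotate_root.
have [PoA|notPoA] := boolP (P (o + leaves A)).
  by move=> _; apply: rotate_root => -[_|[]] //; rewrite addn0.
rewrite /= -addn1 => /(IHC true (o + leaves A) Leaf) [|C' rC wC'].
  by apply/dirs_within_cat.
exists (Node A C'); first exact: rot_right.
by apply/dirs_within_cat; rewrite size_leaf_dirs_aux.
Qed.

Lemma rotate_unsaturated o t : dirs_within P o (leaf_dirs_aux false t) ->
  ~~ saturated o t ->
  exists2 t', rot_step t t' & dirs_within P o (leaf_dirs_aux false t').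
Proof.
elim: t o => [//|A IHA R _] o w.
have [satA|unsatA] := boolP (saturated o A).
  by rewrite /= satA; exact: rotate_into_comb.
move=> _; move/dirs_within_cat: w => [wA]; rewrite size_leaf_dirs_aux => wR.
have [A' rA wA'] := IHA o wA unsatA.
exists (Node A' R); first exact: rot_left.
by apply/dirs_within_cat; rewrite size_leaf_dirs_aux -(rot_step_leaves rA).
Qed.

Lemma saturate t : dirs_within P 0 (leaf_dirs t) ->
  exists U, [/\ tamari_le t U, saturated 0 U & dirs_within P 0 (leaf_dirs U)].
Proof.
have [k] := ubnP (leaves t * leaves t - left_weight t).
elim: k t => // k IH t bound wt.
have [satt|unsatt] := boolP (saturated 0 t).
  by exists t; split=> //; apply: rt_refl.
have [t' rt wt'] := rotate_unsaturated wt unsatt.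
have [|U [t'U satU wU]] := IH t' _ wt'.
  have := rot_step_left_weight rt; have := left_weight_le t'.
  by rewrite -(rot_step_leaves rt); lia.
by exists U; split=> //; apply: rt_trans t'U; apply: rt_step.
Qed.

Lemma comb_outside_eq o o' R R' : comb_outside o R -> comb_outside o' R' ->
  leaves R = leaves R' -> R = R'.
Proof.
elim: R o R' o' => [|[|//] _ C IHC] o [|[|//] C'] o' //=.
- by have := leaves_gt0 C'; lia.
- by have := leaves_gt0 C; lia.
move=> /andP[_ combC] /andP[_ combC'] eCC'.
by congr Node; apply: IHC combC combC' _; lia.
Qed.

Lemma comb_outside_notin o R i : comb_outside o R ->
  o <= i < o + leaves R - 1 -> ~~ P i.
Proof.
elim: R o => [|[|//] _ C IHC] o /=; first by lia.
move=> /andP[notPo combC] bounds.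
have [-> //|ne_io] := eqVneq i o.
by apply: IHC combC _; lia.
Qed.

Lemma saturated_left_leaves o A R A' R' :
  saturated o (Node A R) -> dirs_within P o (leaf_dirs_aux false (Node A' R')) ->
  leaves (Node A R) = leaves (Node A' R') -> leaves A' <= leaves A.
Proof.
move=> /andP[_ combR] /dirs_within_cat[wA' _] /= e.
rewrite leqNgt; apply/negP => ltAA'.
case: A' wA' e ltAA' => [|A1 A2] wA' e ltAA'; first by move: ltAA' (leaves_gt0 A) => /=; lia.
have := wA' (leaves (Node A1 A2)).-1.
rewrite -(size_leaf_dirs_aux false) nth_last /= last_cat last_leaf_dirs_aux_true.
move=> /(_ isT); apply/negP; apply: comb_outside_notin combR _.
by rewrite size_cat !size_leaf_dirs_aux; move: e ltAA' (leaves_gt0 R') => /=; lia.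
Qed.

Lemma saturated_unique o t t' : saturated o t -> saturated o t' ->
  dirs_within P o (leaf_dirs_aux false t) -> dirs_within P o (leaf_dirs_aux false t') ->
  leaves t = leaves t' -> t = t'.
Proof.
elim: t o t' => [|A IHA R _] o [|A' R'] //=.
- by have := leaves_gt0 A'; have := leaves_gt0 R'; lia.
- by have := leaves_gt0 A; have := leaves_gt0 R; lia.
move=> satt satt' wt wt' e.
have eA : leaves A = leaves A'.
  apply/eqP; rewrite eqn_leq (saturated_left_leaves satt' wt (esym e)).
  exact: saturated_left_leaves satt wt' e.
move: satt satt' wt wt' => /andP[satA combR] /andP[satA' combR']
  /dirs_within_cat[wA _] /dirs_within_cat[wA' _].
have eAA' := IHA o A' satA satA' wA wA' eA; subst A'.
by congr Node; apply: comb_outside_eq combR combR' _; lia.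
Qed.

End Saturation.

Lemma tamari_upper_bound_within P s t : leaves s = leaves t ->
  dirs_within P 0 (leaf_dirs s) -> dirs_within P 0 (leaf_dirs t) ->
  exists U, [/\ tamari_le s U, tamari_le t U & dirs_within P 0 (leaf_dirs U)].
Proof.
move=> e ws wt.
have [U [sU satU wU]] := saturate ws.
have [V [tV satV wV]] := saturate wt.
have eUV : U = V.
  apply: (saturated_unique satU satV wU wV).
  by rewrite -(tamari_le_leaves sU) -(tamari_le_leaves tV).
by exists U; split=> //; rewrite eUV.
Qed.

Lemma des_tree_join n s t j i : pbt n s -> pbt n t -> is_tamari_join n s t j ->
  des_tree n j i -> des_tree n s i || des_tree n t i.
Proof.
move=> ps pt [_ _ _ j_least] /and3P[i_gt0 i_lt_n ji].
pose P k := nth false (leaf_dirs s) k || nth false (leaf_dirs t) k.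
have ws : dirs_within P 0 (leaf_dirs s) by move=> k sk; rewrite /P sk.
have wt : dirs_within P 0 (leaf_dirs t) by move=> k tk; rewrite /P tk orbT.
have [|U [sU tU wU]] := tamari_upper_bound_within _ ws wt; first by rewrite ps pt.
have jU : tamari_le j U by apply: j_least; rewrite // /pbt -(tamari_le_leaves sU).
by have := dirs_le_within (tamari_le_dirs_le jU) wU ji; rewrite /des_tree i_gt0 i_lt_n.
Qed.

Lemma nth_perm_values n (s : 'S_n) m (lt_mn : m < n) :
  nth 0 [seq val (s k) | k <- enum 'I_n] m = s (Ordinal lt_mn).
Proof.
rewrite (nth_map (Ordinal lt_mn)) ?size_enum_ord //.
by congr (val (s _)); apply: val_inj; rewrite /= nth_enum_ord.
Qed.

Lemma des_perm_weak_le n (s t : 'S_n) i : weak_le s t -> des_perm s i -> des_perm t i.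
Proof.
move=> le_st /and3P[i_gt0 i_lt_n]; rewrite /des_perm i_gt0 i_lt_n /=.
have lt_pn : i.-1 < n by lia.
rewrite !(nth_perm_values _ lt_pn) !(nth_perm_values _ i_lt_n) => des_s.
have /le_st /andP[] // : inv_perm s (Ordinal lt_pn) (Ordinal i_lt_n).
by rewrite /inv_perm des_s /=; lia.
Qed.

Theorem mainTheorem12 (n : nat) (sigma tau : 'S_n) (s t : tree)
    (J : 'S_n) (j : tree) :
  parking sigma s -> parking tau t ->
  is_weak_join sigma tau J -> is_tamari_join n s t j ->
  [/\ parking J j,
      parking_le (sigma, s) (J, j),
      parking_le (tau, t) (J, j) &
      forall (rho : 'S_n) (u : tree), parking rho u ->
        parking_le (sigma, s) (rho, u) -> parking_le (tau, t) (rho, u) ->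
        parking_le (J, j) (rho, u)].
Proof.
move=> [ps des_s] [pt des_t] [sJ tJ J_least] jjoin.
have [pj sj tj j_least] := jjoin.
split=> //.
- split=> // i /(des_tree_join ps pt jjoin) /orP[/des_s | /des_t].
  + exact: des_perm_weak_le sJ.
  + exact: des_perm_weak_le tJ.
- move=> rho u [pu _] [s_rho s_u] [t_rho t_u].
  by split; [exact: J_least | exact: j_least].
Qed.
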